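(* Let $P$ satisfy (S1)–(S4). Then every element $\bar h\in H$ is both a $[2,t]$-commutator and a $[-2,t]$-commutator, i.e. there are $\bar g_1,\bar g_2\in H$ with $\bar h=\bar g_1\alpha(\bar g_1^{-1})\bar g_2\alpha(\bar g_2^{-1})$ and there are $\bar g_1',\bar g_2'\in H$ with $\bar h=\alpha(\bar g_1')\bar g_1'^{-1}\alpha(\bar g_2')\bar g_2'^{-1}$.
   Context: Conditions on a finite group $P$: (S1) for all $a_1,a_2\in P$ there are $x,y$ with $a_2=x^{-1}a_1^{-1}yxy^{-1}$; (S2) for all $a_1,a_2,a_3$ there are $u,v$ with $a_2=a_3ua_1^{-1}a_3^{-1}vu^{-1}v^{-1}$; (S3) for all $u_1,u_2,u_3,u_4\ne1$ there are $x,y,z$ with $u_4=x^{-1}u_1xy^{-1}u_2yz^{-1}u_3z$; (S4) there are $u_1,u_2,u_3\ne1$ such that there are no $x,y$ with $u_3=x^{-1}u_2^{-1}xy^{-1}u_1^{-1}y$. $H=\bigoplus_{i\in\mathbb Z}H_i$, each $H_i$ a copy of $P$, elements finitely supported sequences $(h_i)_{i\in\mathbb Z}$ with coordinatewise multiplication; $\alpha\in\mathrm{Aut}(H)$ is $\alpha((h_i)_i)=(h_{i+1})_i$. *)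

(* P is modelled as the whole carrier of a finGroupType gT. *)
From mathcomp Require Import all_boot all_algebra all_fingroup.
Set Implicit Arguments. Unset Strict Implicit. Unset Printing Implicit Defensive.
Import GRing.Theory Num.Theory.

Local Open Scope group_scope.

Section Conds.
Variable gT : finGroupType.

Definition S1 : Prop := forall a1 a2 : gT,
  exists x y : gT, a2 = x^-1 * a1^-1 * y * x * y^-1.

Definition S2 : Prop := forall a1 a2 a3 : gT,
  exists u v : gT, a2 = a3 * u * a1^-1 * a3^-1 * v * u^-1 * v^-1.

Definition S3 : Prop := forall u1 u2 u3 u4 : gT,
  u1 != 1 -> u2 != 1 -> u3 != 1 -> u4 != 1 ->
  exists x y z : gT, u4 = x^-1 * u1 * x * y^-1 * u2 * y * z^-1 * u3 * z.

Definition S4 : Prop := exists u1 u2 u3 : gT,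
  [/\ u1 != 1, u2 != 1, u3 != 1 &
   ~ exists x y : gT, u3 = x^-1 * u2^-1 * x * y^-1 * u1^-1 * y].

(* H = restricted direct sum of Z copies of P: finitely supported maps int -> gT,
   with coordinatewise operations. *)
Definition inH (h : int -> gT) : Prop :=
  exists N : nat, forall i : int, (N < `|i|)%N -> h i = 1.

Definition Hmul (g h : int -> gT) : int -> gT := fun i => g i * h i.
Definition Hinv (g : int -> gT) : int -> gT := fun i => (g i)^-1.

Definition alpha (h : int -> gT) : int -> gT := fun i => h (i + 1)%R.

End Conds.

From mathcomp Require Import all_boot all_algebra all_fingroup.
From mathcomp Require Import zify.
From Stdlib Require Import FunctionalExtensionality.
Import GRing.Theory.

Set Implicit Arguments.
Unset Strict Implicit.
Unset Printing Implicit Defensive.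

(* By (S1) with a2 = 1, every element of P is a commutator x y x^-1 y^-1.  A
   finitely supported v is of the form g alpha(g)^-1 as soon as its ordered
   product v_i v_(i+1) ... is 1: take g_j = v_j v_(j+1) ... .  Given h with
   ordered product Q, write Q^-1 = x y x^-1 y^-1 and put x, y at two consecutive
   places just right of the support of h; the resulting g1 makes
   (g1 alpha(g1)^-1)^-1 h a sequence of ordered product Q Q^-1 = 1.  The second
   form follows by applying the first one to h^-1, since
   alpha(g) g^-1 = (g alpha(g)^-1)^-1. *)

Local Open Scope group_scope.

Lemma S1_commutator (gT : finGroupType) :
  S1 gT -> forall a : gT, exists x y, a = x * y * x^-1 * y^-1.
Proof.
move=> s1 a; have [x [y E]] := s1 a 1; exists y, x.
apply: invg_inj; rewrite !invMg !invgK.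
apply: (mulgI x^-1); apply: (mulIg (y * x * y^-1)); rewrite !mulgA -E.
by rewrite mulVg mul1g !mulgKV mulgV.
Qed.

Section TwistedCommutators.
Variable gT : finGroupType.
Implicit Types (f g h v : int -> gT) (i j : int) (n : nat).

Definition tcomm g : int -> gT := Hmul g (alpha (Hinv g)).

Definition supported f i n : Prop :=
  forall j, (j < i)%R \/ (i + n%:Z <= j)%R -> f j = 1.

Lemma inHP f : inH f <-> exists i n, supported f i n.
Proof.
split=> [[N fN] | [i [n fin]]].
  by exists (- N%:Z)%R, (N + N + 1)%N => j hj; apply: fN; lia.
by exists (absz i + n)%N => j hj; apply: fin; lia.
Qed.

Lemma supported_tcomm g i n :
  supported g i n -> supported (tcomm g) (i - 1)%R n.+1.
Proof.
by move=> gin j hj; rewrite /tcomm /Hmul /alpha /Hinv !gin ?invg1 ?mulg1 //; lia.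
Qed.

Fixpoint iprod v i n : gT :=
  if n is n'.+1 then v i * iprod v (i + 1)%R n' else 1.

Lemma iprod_cat v i m n :
  iprod v i (m + n) = iprod v i m * iprod v (i + m%:Z)%R n.
Proof.
elim: m i => [|m IH] i /=; first by rewrite mul1g addr0.
by rewrite IH mulgA; congr (_ * iprod v _ n); lia.
Qed.

Lemma eq_iprod v w i n :
  (forall k, (k < n)%N -> v (i + k%:Z)%R = w (i + k%:Z)%R) ->
  iprod v i n = iprod w i n.
Proof.
elim: n i => [|n IH] i vw //=.
have := vw 0%N isT; rewrite addr0 => ->; congr (_ * _).
apply: IH => k ltkn; have -> : (i + 1 + k%:Z = i + k.+1%:Z)%R by lia.
exact: vw.
Qed.

Lemma tcomm_of_iprod1 v i n :
  supported v i n -> iprod v i n = 1 -> exists b, inH b /\ v = tcomm b.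
Proof.
move=> vin vtot.
pose b j := if (i <= j)%R then iprod v j (n - absz (j - i)) else 1.
exists b; split.
  apply/inHP; exists i, n => j hj; rewrite /b; case: ifP => // hij.
  by have -> : (n - absz (j - i)%R = 0)%N by lia.
apply: functional_extensionality => j; rewrite /tcomm /Hmul /alpha /Hinv /b.
case: (boolP (i <= j)%R) => hij; last first.
  rewrite mul1g vin; last by lia.
  case: ifP => hij1; last by rewrite invg1.
  have -> : (j + 1 = i)%R by lia.
  by rewrite subrr subn0 vtot invg1.
rewrite ifT; last by lia.
case: (ltnP (absz (j - i)) n) => hjn.
  have -> : (n - absz (j - i)%R = (n - absz (j + 1 - i)%R).+1)%N by lia.
  by rewrite /= mulgK.
have -> : (n - absz (j - i)%R = 0)%N by lia.
have -> : (n - absz (j + 1 - i)%R = 0)%N by lia.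
by rewrite vin ?invg1 ?mulg1 //; lia.
Qed.

Definition pair_at (P : int) (x y : gT) : int -> gT :=
  fun j => if j == P then x else if j == (P + 1)%R then y else 1.

Lemma supported_pair_at P x y : supported (pair_at P x y) P 2.
Proof. by move=> j hj; rewrite /pair_at !ifN_eq //; lia. Qed.

Lemma iprod_tcomm_pair_at P x y :
  iprod (Hinv (tcomm (pair_at P x y))) (P - 1)%R 3 = x * y * x^-1 * y^-1.
Proof.
rewrite /= /tcomm /Hmul /Hinv /alpha /pair_at.
have -> : (P - 1 + 1 = P)%R by lia.
have -> : (P + 1 + 1 = P + 2)%R by lia.
rewrite !eqxx !ifN_eq; try lia.
by rewrite invg1 mul1g !mulg1 !invMg !invgK !mulgA.
Qed.

Lemma inH_Hinv h : inH h -> inH (Hinv h).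
Proof. by case=> N hN; exists N => j /hN; rewrite /Hinv => ->; rewrite invg1. Qed.

Lemma exists_tcomm_pair :
  S1 gT -> forall h, inH h ->
  exists g1 g2, inH g1 /\ inH g2 /\ h = Hmul (tcomm g1) (tcomm g2).
Proof.
move=> s1 h /inHP[i [n hin]].
have [x [y Qinv]] := S1_commutator s1 (iprod h i n)^-1.
pose g1 := pair_at (i + n%:Z + 1)%R x y.
have c1in : supported (tcomm g1) (i + n%:Z)%R 3.
  by have := supported_tcomm (@supported_pair_at (i + n%:Z + 1)%R x y); rewrite addrK.
pose v := Hmul (Hinv (tcomm g1)) h.
have vin : supported v i (n + 3).
  by move=> j hj; rewrite /v /Hmul /Hinv c1in ?hin ?invg1 ?mulg1 //; lia.
have vtot : iprod v i (n + 3) = 1.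
  rewrite iprod_cat (@eq_iprod v h) => [|k ltkn]; last first.
    by rewrite /v /Hmul /Hinv c1in ?invg1 ?mul1g //; lia.
  rewrite (@eq_iprod v (Hinv (tcomm g1)) (i + n%:Z)) => [|k ltk3]; last first.
    by rewrite /v /Hmul hin ?mulg1 //; lia.
  have := iprod_tcomm_pair_at (i + n%:Z + 1)%R x y; rewrite addrK => ->.
  by rewrite -Qinv mulgV.
have [g2 [g2H vE]] := tcomm_of_iprod1 vin vtot.
exists g1, g2; split.
  by apply/inHP; exists (i + n%:Z + 1)%R, 2%N; exact: supported_pair_at.
split=> //; apply: functional_extensionality => j.
by rewrite /Hmul -vE /v /Hmul /Hinv mulKVg.
Qed.

End TwistedCommutators.

Theorem lemma4p4 (gT : finGroupType) :
  S1 gT -> S2 gT -> S3 gT -> S4 gT ->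
  forall h : int -> gT, inH h ->
    (exists g1 g2 : int -> gT, inH g1 /\ inH g2 /\
       h = Hmul (Hmul (Hmul g1 (alpha (Hinv g1))) g2) (alpha (Hinv g2))) /\
    (exists g1' g2' : int -> gT, inH g1' /\ inH g2' /\
       h = Hmul (Hmul (Hmul (alpha g1') (Hinv g1')) (alpha g2')) (Hinv g2')).
Proof.
move=> s1 _ _ _ h hH; split.
  have [g1 [g2 [g1H [g2H E]]]] := exists_tcomm_pair s1 hH.
  exists g1, g2; split=> //; split=> //.
  rewrite E; apply: functional_extensionality => i.
  by rewrite /Hmul mulgA.
have [a [b [aH [bH E]]]] := exists_tcomm_pair s1 (inH_Hinv hH).
exists b, a; split=> //; split=> //.
apply: functional_extensionality => i; rewrite -[h i]invgK.
have -> : (h i)^-1 = Hinv h i by [].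
by rewrite E /Hmul /tcomm /Hmul /Hinv /alpha !invMg !invgK !mulgA.
Qed.
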